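(* Let $Y\in\mathbb{R}$, $Z=(Z^{(1)},\dots,Z^{(p)})\in\mathbb{R}^p$, $X=(X^{(1)},\dots,X^{(d)})\in\mathbb{R}^d$ and $W\in\mathbb{R}^d$ be random variables/vectors with finite second moments, and write $$\mathrm{Cov}\begin{pmatrix} Z\\ X\\ W\end{pmatrix}=\begin{bmatrix} A & B & C\\ B^{\mathsf T} & D & F\\ C^{\mathsf T} & F^{\mathsf T} & G\end{bmatrix},\quad A\in\mathbb{R}^{p\times p},\ B,C\in\mathbb{R}^{p\times d},\ D,F,G\in\mathbb{R}^{d\times d}.$$ Let $(\alpha,\beta_Z,\beta_X)=\arg\min_{a\in\mathbb{R},b_Z\in\mathbb{R}^p,b_X\in\mathbb{R}^d}\mathbb{E}\big[\tfrac12(Y-a-Z^{\mathsf T}b_Z-X^{\mathsf T}b_X)^2\big]$ be the population regression coefficients. Let $(Y_i,Z_i,X_i,W_i)_{i=1}^N$ be samples satisfying: (i) the samples are identically distributed with the law of $(Y,Z,X,W)$, and the sample first and second moments (all entries of the sample analogues of $\mathbb{E}[V]$ and $\mathbb{E}[VV^{\mathsf T}]$, $V=(Y,Z,X,W)$) converge in probability to the corresponding population moments as $N\to\infty$; (ii) with $\varepsilon_i=Y_i-\alpha-Z_i^{\mathsf T}\beta_Z-X_i^{\mathsf T}\beta_X$, $\varepsilon_i$ is uncorrelated with $W_i-X_i$; (iii) the covariance matrices of $(Z,W)$ and of $(Z,X)$ are positive definite. Let $\hat\beta_Z^{(\mathrm{OM})}$ be the OLS coefficient vector for $Z$ in the regression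 of $Y_i$ on an intercept and $Z_i$ (omitting $X$), and define $\mathrm{bias}^{(\mathrm{OM})}_{\beta_Z}=\operatorname{plim}_{N\to\infty}\big(\hat\beta_Z^{(\mathrm{OM})}-\beta_Z\big)$. Suppose that all entries of $X$ are pollutant concentrations and that a subset $P\subseteq\{1,\dots,p\}$ of the entries of $Z$ are pollutant concentrations. Assume: (No Benefit) $\beta_{X,j}\le 0$ for all $j\in\{1,\dots,d\}$ and $\beta_{Z,l}\le 0$ for all $l\in P$; (Weak Partial $\mathrm{PC}_+$) for each $l\in P$ and each $j\in\{1,\dots,d\}$, the partial correlation of $Z^{(l)}$ and $X^{(j)}$ conditional on $(Z^{(m)})_{m\ne l}$ is positive. Then for every $k\in P$, $\big[\mathrm{bias}^{(\mathrm{OM})}_{\beta_Z}\big]_k\le 0$.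
   Context: Partial correlation of two entries $U,V$ of a random vector given a set of other entries is the correlation between the population linear-regression residuals of $U$ and of $V$ on those other entries (equivalently, computed from the inverse covariance matrix). ''plim'' denotes limit in probability. *)

From Stdlib Require List.
From HB Require Import structures.
From mathcomp Require Import all_boot all_order all_algebra.
From mathcomp Require Import all_classical all_reals all_analysis.
Set Implicit Arguments. Unset Strict Implicit. Unset Printing Implicit Defensive.
Import Order.TTheory GRing.Theory Num.Theory.
Import numFieldNormedType.Exports.
Local Open Scope classical_set_scope.
Local Open Scope ring_scope.

Section Defs.
Context {d : measure_display} {T : measurableType d} {R : realType}.
Variable Pr : probability T R.

Inductive var_idx (p q : nat) : Type :=
  | VY | VZ of 'I_p | VX of 'I_q | VW of 'I_q.

Definition joint (p q : nat) (Y : T -> R) (Z : 'I_p -> T -> R)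
    (X W : 'I_q -> T -> R) (u : var_idx p q) : T -> R :=
  match u with
  | VY => Y | VZ l => Z l | VX j => X j | VW j => W j
  end.

Definition same_law (I : Type) (U V : I -> T -> R) : Prop :=
  forall s : seq (I * set R), List.Forall (fun ub => measurable ub.2) s ->
    Pr [set w | List.Forall (fun ub => ub.2 (U ub.1 w)) s] =
    Pr [set w | List.Forall (fun ub => ub.2 (V ub.1 w)) s].

Definition cvg_in_prob (Xn : nat -> T -> R) (c : R) : Prop :=
  forall eps : R, 0 < eps ->
    (fun n => Pr [set w | eps <= `|Xn n w - c|]) @ \oo --> 0%E.

(* Population mean (a real number; finite under finite second moments). *)
Definition mean (U : T -> R) : R := fine ('E_Pr[U])%E.

Definition cov (U V : T -> R) : R := fine (covariance Pr U V).

Definition covmx (n : nat) (V : 'I_n -> T -> R) : 'M[R]_n :=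
  \matrix_(i, j) cov (V i) (V j).

Definition catRV (m n : nat) (V1 : 'I_m -> T -> R) (V2 : 'I_n -> T -> R)
    : 'I_(m + n) -> T -> R :=
  fun i => match fintype.split i with inl a => V1 a | inr b => V2 b end.

(* Partial correlation of entries i and j of V given all other entries of V,
   computed from the inverse covariance (precision) matrix. *)
Definition pcor (n : nat) (V : 'I_n -> T -> R) (i j : 'I_n) : R :=
  let O := invmx (covmx V) in - O i j / Num.sqrt (O i i * O j j).

Definition ols_Z (p : nat) (Ys : nat -> T -> R) (Zs : nat -> 'I_p -> T -> R)
    (N : nat) (w : T) : 'I_p -> R :=
  let D : 'M[R]_(N, 1 + p) :=
    \matrix_(i < N, c < 1 + p)
      match fintype.split c with inl _ => 1 | inr l => Zs i l w end in
  let y : 'cV[R]_N := \col_(i < N) Ys i w in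
  let theta := invmx (D^T *m D) *m (D^T *m y) in
  fun l => theta (rshift 1 l) 0.

End Defs.

Definition posdef {R : realType} (n : nat) (M : 'M[R]_n) : Prop :=
  forall v : 'cV[R]_n, v != 0 -> 0 < (v^T *m M *m v) 0 0.

(** The OLS coefficient vector is a continuous function of the sample second
   moments of (1, Z, Y) near their population values, so its plim is the
   population coefficient of Z in the regression of Y on (1, Z); eliminating the
   intercept by a Schur complement, this is Cov(Z)^-1 Cov(Z, Y).  The
   first-order conditions of the long regression give
   Cov(Z, Y) = Cov(Z) betaZ + Cov(Z, X) betaX, so the bias is
   Cov(Z)^-1 Cov(Z, X) betaX.  Column j of Cov(Z)^-1 Cov(Z, X) holds the
   coefficients of Z in the regression of X_j on Z; read off the last column of
   the inverse covariance matrix of (Z, X_j), each of them has the sign of the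
   corresponding partial correlation, hence is positive on the pollutant
   entries, and betaX <= 0 makes the bias nonpositive there. *)

From Pilot Require Import Defs.
From HB Require Import structures.
From mathcomp Require Import all_boot all_order all_algebra.
From mathcomp Require Import all_classical all_reals all_analysis.
From mathcomp Require Import ring lra measurable_realfun.
Import Order.TTheory GRing.Theory Num.Theory.
Import numFieldNormedType.Exports.
Local Open Scope classical_set_scope.
Local Open Scope ring_scope.

Lemma split_lshift m n (i : 'I_m) : fintype.split (lshift n i) = inl i.
Proof. exact: (unsplitK (inl i)). Qed.

Lemma split_rshift m n (j : 'I_n) : fintype.split (rshift m j) = inr j.
Proof. exact: (unsplitK (inr j)). Qed.

(** * Least-squares coefficients *)

(* For the second-moment matrix [S] of a vector whose last entry is the
   response, [lsq_coef S] solves the normal equations of the regression of the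
   response on the other entries. *)
Definition lsq_coef {R : fieldType} {n : nat} (S : 'M[R]_(n + 1)) : 'cV[R]_n :=
  invmx (ulsubmx S) *m ursubmx S.

Lemma lsq_coef_gram {R : fieldType} N n (A : 'M[R]_(N, n)) (y : 'cV[R]_N) :
  lsq_coef ((row_mx A y)^T *m row_mx A y) = invmx (A^T *m A) *m (A^T *m y).
Proof. by rewrite /lsq_coef tr_row_mx mul_col_row block_mxKul block_mxKur. Qed.

Lemma lsq_coefZ {R : fieldType} n (c : R) (S : 'M[R]_(n + 1)) :
  c != 0 -> ulsubmx (c *: S) \in unitmx -> lsq_coef (c *: S) = lsq_coef S.
Proof.
move=> c_neq0; have ulZ : ulsubmx (c *: S) = c *: ulsubmx S.
  by apply/matrixP => i j; rewrite !mxE.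
have urZ : ursubmx (c *: S) = c *: ursubmx S.
  by apply/matrixP => i j; rewrite !mxE.
rewrite /lsq_coef ulZ urZ => cS_unit; rewrite invmxZ //.
by rewrite -scalemxAl -scalemxAr scalerA mulVf // scale1r.
Qed.

Section PositiveDefinite.
Variable R : realType.

Lemma posdef_unitmx n (M : 'M[R]_n) : posdef M -> M \in unitmx.
Proof.
move=> pM; rewrite unitmxE unitfE; apply/negP => /det0P [v v0 vM].
suff : 0 < (v *m M *m v^T) 0 0 by rewrite vM mul0mx mxE ltxx.
have := pM v^T; rewrite trmxK; apply.
by apply: contra v0 => /eqP h; rewrite -[v]trmxK h trmx0.
Qed.

Lemma posdef_mxsub n m (f : 'I_m -> 'I_n) (M : 'M[R]_n) :
  injective f -> posdef M -> posdef (mxsub f f M).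
Proof.
move=> f_inj pM v v0; set S : 'M[R]_(n, m) := colsub f 1%:M.
have SK : rowsub f S = 1%:M.
  by apply/matrixP => a b; rewrite !mxE (inj_eq f_inj).
have StE : S^T = rowsub f 1%:M by apply/matrixP => i j; rewrite !mxE eq_sym.
have -> : mxsub f f M = S^T *m M *m S.
  rewrite StE mul_rowsub_mx mul1mx mulmx_colsub mulmx1.
  by apply/matrixP => i j; rewrite !mxE.
have -> : v^T *m (S^T *m M *m S) *m v = (S *m v)^T *m M *m (S *m v).
  by rewrite trmx_mul !mulmxA.
apply: pM; apply: contra v0 => /eqP Sv0.
have := congr1 (rowsub f) Sv0; rewrite -mul_rowsub_mx SK mul1mx => ->.
by apply/eqP/matrixP => i j; rewrite !mxE.
Qed.

Lemma posdef_ulsubmx m n (M : 'M[R]_(m + n)) : posdef M -> posdef (ulsubmx M).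
Proof.
have -> : ulsubmx M = mxsub (lshift n) (lshift n) M.
  by apply/matrixP => i j; rewrite !mxE.
by apply: posdef_mxsub; exact: lshift_inj.
Qed.

Lemma lsq_coef_gt0_of_pcor p (S : 'M[R]_(p + 1)) (k : 'I_p) :
  posdef S ->
  0 < - invmx S (lshift 1 k) (rshift p ord0) /
        Num.sqrt (invmx S (lshift 1 k) (lshift 1 k) *
                  invmx S (rshift p ord0) (rshift p ord0)) ->
  0 < lsq_coef S k 0.
Proof.
set O := invmx S; set L := rshift p ord0; move=> pS.
have SO : S *m O = 1%:M by rewrite mulmxV // posdef_unitmx.
(* [z] is the last column of [S^-1]: the top block of [S *m z = col L 1] gives
   [usubmx z = - O L L *: lsq_coef S], with [O L L > 0]. *)
set z := col L O.
have Sz : S *m z = col L 1%:M by rewrite /z !colE mulmxA SO.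
have OLL_gt0 : 0 < O L L.
  have z0 : z != 0.
    apply: contraTneq isT => z0; move: Sz; rewrite z0 mulmx0 => /matrixP/(_ L 0).
    by rewrite !mxE eqxx => /eqP; rewrite eq_sym oner_eq0.
  by have := pS z z0; rewrite -mulmxA Sz colE mul1mx -colE !mxE.
have Au : ulsubmx S \in unitmx by apply/posdef_unitmx/posdef_ulsubmx.
have top : ulsubmx S *m usubmx z + ursubmx S *m dsubmx z = 0.
  have := congr1 usubmx Sz; rewrite -{1}(submxK S) -{1}(vsubmxK z).
  rewrite mul_block_col col_mxKu => ->.
  by apply/matrixP => i j; rewrite !mxE eq_lrshift.
have dz : dsubmx z = (O L L)%:M.
  by apply/matrixP => i j; rewrite !ord1 !mxE.
have uE : usubmx z = - O L L *: lsq_coef S.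
  move/eqP: top; rewrite addr_eq0 dz mul_mx_scalar -scaleNr => /eqP Auz.
  by rewrite /lsq_coef scalemxAr -Auz mulKmx.
have Ok : O (lshift 1 k) L = - O L L * lsq_coef S k 0.
  by move/matrixP/(_ k 0): uE; rewrite !mxE.
rewrite Ok !mulNr opprK; apply: contraTT; rewrite -!leNgt => c_le0.
by rewrite mulr_le0_ge0 ?invr_ge0 ?sqrtr_ge0 // pmulr_rle0.
Qed.

End PositiveDefinite.

Section InterceptElimination.
Context {R : fieldType} {p : nat} {mu : 'cV[R]_p} {M : 'M[R]_p}.
Let C := M - mu *m mu^T.

Lemma moment_block_factor :
  block_mx 1%:M mu^T mu M = block_mx 1%:M 0 mu 1%:M *m block_mx 1%:M mu^T 0 C.
Proof.
rewrite mulmx_block !mul1mx !mul0mx !mulmx1 !addr0.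
by rewrite /C addrC subrK.
Qed.

Hypothesis C_unit : C \in unitmx.

Lemma unitmx_moment_block : block_mx (1%:M : 'M[R]_1) mu^T mu M \in unitmx.
Proof.
rewrite moment_block_factor unitmx_mul !unitmxE det_lblock det_ublock !det1 !mul1r.
by rewrite unitr1 -unitmxE.
Qed.

Lemma dsubmx_moment_block_solve (my : 'M[R]_1) (mzy : 'cV[R]_p) :
  dsubmx (invmx (block_mx 1%:M mu^T mu M) *m col_mx my mzy) =
  invmx C *m (mzy - mu *m my).
Proof.
set t := invmx C *m _; set t0 := my - mu^T *m t.
have solves : block_mx 1%:M mu^T mu M *m col_mx t0 t = col_mx my mzy.
  rewrite mul_block_col mul1mx subrK; congr col_mx.
  rewrite mulmxBr mulmxA addrAC -addrA -mulmxBl -/C mulKVmx //.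
  by rewrite addrC subrK.
by rewrite -solves mulKmx ?col_mxKd // unitmx_moment_block.
Qed.

End InterceptElimination.

(** * Continuity and measurability of matrix functions *)

Section MatrixLimits.
Context {R : numFieldType} {U : Type} {F : set_system U} {FF : Filter F}.

Lemma cvg_det n (A : U -> 'M[R]_n) (A0 : 'M[R]_n) :
  (forall i j, A x i j @[x --> F] --> A0 i j) -> \det (A x) @[x --> F] --> \det A0.
Proof.
move=> cvgA; apply: cvg_big => [|s _]; first exact: add_continuous.
apply: cvgM; first exact: cvg_cst.
by apply: cvg_big => [|i _]; [exact: mul_continuous | exact: cvgA].
Qed.

Lemma cvg_invmx n (A : U -> 'M[R]_n) (A0 : 'M[R]_n) :
  A0 \in unitmx -> (forall i j, A x i j @[x --> F] --> A0 i j) ->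
  forall i j, invmx (A x) i j @[x --> F] --> invmx A0 i j.
Proof.
move=> A0_unit cvgA i j.
have cvg_detA : \det (A x) @[x --> F] --> \det A0 by exact: cvg_det.
have detA0 : \det A0 != 0 by rewrite -unitfE -unitmxE.
have cvg_adj : \adj (A x) i j @[x --> F] --> \adj A0 i j.
  rewrite mxE; under eq_cvg do rewrite mxE.
  apply: cvgM; first exact: cvg_cst.
  by apply: cvg_det => a b; under eq_cvg do rewrite !mxE; rewrite !mxE; exact: cvgA.
(* Near [A0] the determinant does not vanish, so [invmx] is the adjugate formula. *)
apply: cvg_trans (near_eq_cvg _) _; last first.
  by rewrite /invmx A0_unit mxE; apply: cvgM; [exact: (cvgV detA0 cvg_detA) | exact: cvg_adj].
near=> x; rewrite /invmx unitmxE unitfE.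
suff -> : \det (A x) != 0 by rewrite mxE.
by near: x; exact: cvgr_neq0 cvg_detA detA0.
Unshelve. all: end_near.
Qed.

Lemma cvg_lsq_coef n (S : U -> 'M[R]_(n + 1)) (S0 : 'M[R]_(n + 1)) :
  ulsubmx S0 \in unitmx -> (forall i j, S x i j @[x --> F] --> S0 i j) ->
  forall i, lsq_coef (S x) i 0 @[x --> F] --> lsq_coef S0 i 0.
Proof.
move=> S0_unit cvgS i; rewrite mxE; under eq_cvg do rewrite mxE.
apply: cvg_big => [|l _]; first exact: add_continuous.
apply: cvgM; last by rewrite !mxE; under eq_cvg do rewrite !mxE; exact: cvgS.
apply: cvg_invmx => // a b; rewrite !mxE; under eq_cvg do rewrite !mxE.
exact: cvgS.
Qed.

End MatrixLimits.

Lemma near_ulsubmx_unit {R : numFieldType} {n} {S0 : 'M[R]_(n + 1)} :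
  ulsubmx S0 \in unitmx -> nbhs S0 [set A : 'M[R]_(n + 1) | ulsubmx A \in unitmx].
Proof.
move=> S0_unit; have det_cvg : \det (ulsubmx A) @[A --> S0] --> \det (ulsubmx S0).
  apply: (@cvg_det R _ (nbhs S0) _) => i j; rewrite !mxE; under eq_cvg do rewrite !mxE.
  exact: coord_continuous.
near=> A; rewrite /= unitmxE unitfE; near: A.
by apply: cvgr_neq0 det_cvg _; rewrite -unitfE -unitmxE.
Unshelve. all: end_near.
Qed.

Lemma lsq_coef_continuous {R : numFieldType} n (S0 : 'M[R]_(n + 1)) i :
  ulsubmx S0 \in unitmx -> {for S0, continuous (fun A : 'M[R]_(n + 1) => lsq_coef A i 0)}.
Proof.
by move=> S0_unit; apply: (@cvg_lsq_coef R _ (nbhs S0)) => // a b; exact: coord_continuous.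
Qed.

Section Measurability.
Context {dsp : measure_display} {T : measurableType dsp} {R : realType}.

Lemma measurable_inv : measurable_fun setT (@GRing.inv R).
Proof.
rewrite -(setUv [set 0 : R]); apply/measurable_funU => //; first exact: measurableC.
split; first exact: measurable_fun_set1.
apply: open_continuous_measurable_fun.
  by rewrite openC; apply/accessible_closed_set1/hausdorff_accessible/Rhausdorff.
move=> x; rewrite inE /= => /eqP x0; exact: inv_continuous.
Qed.

Lemma measurable_fun_det n (A : T -> 'M[R]_n) :
  (forall i j, measurable_fun setT (fun w => A w i j)) ->
  measurable_fun setT (fun w => \det (A w)).
Proof.
move=> mA; apply: measurable_sum => s; apply: measurable_funM.
  exact: measurable_cst.
by apply: measurable_prod => i _; exact: mA.
Qed.

Lemma measurable_fun_invmx n (A : T -> 'M[R]_n) :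
  (forall i j, measurable_fun setT (fun w => A w i j)) ->
  forall i j, measurable_fun setT (fun w => invmx (A w) i j).
Proof.
move=> mA i j.
have mdet : measurable_fun setT (fun w => \det (A w)) by exact: measurable_fun_det.
have madj : measurable_fun setT (fun w => \adj (A w) i j).
  under eq_fun do rewrite !mxE.
  apply: measurable_funM; first exact: measurable_cst.
  by apply: measurable_fun_det => a b; under eq_fun do rewrite !mxE; exact: mA.
have invmxE w : invmx (A w) i j =
    if \det (A w) == 0 then A w i j else (\det (A w))^-1 * \adj (A w) i j.
  by rewrite /invmx unitmxE unitfE; case: eqP => //= _; rewrite mxE.
under eq_fun do rewrite invmxE.
apply: measurable_fun_ifT => //.
  by apply: measurable_fun_eqr => //; exact: measurable_cst.
by apply: measurable_funM => //; exact: measurableT_comp measurable_inv mdet.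
Qed.

Lemma measurable_fun_lsq_coef n (S : T -> 'M[R]_(n + 1)) :
  (forall i j, measurable_fun setT (fun w => S w i j)) ->
  forall i, measurable_fun setT (fun w => lsq_coef (S w) i 0).
Proof.
move=> mS i; under eq_fun do rewrite mxE.
apply: measurable_sum => l; apply: measurable_funM.
  by apply: measurable_fun_invmx => a b; under eq_fun do rewrite !mxE; exact: mS.
by under eq_fun do rewrite !mxE; exact: mS.
Qed.

End Measurability.

(** * Moments and the normal equations *)

Lemma eq0_of_quadratic_ge0 (R : realFieldType) (q c : R) :
  (forall t, 0 <= t ^+ 2 * c - t * q) -> q = 0.
Proof.
move=> ge0; set k := `|c| + 1.
have k_gt0 : 0 < k by rewrite /k; have := normr_ge0 c; lra.
have ck : c <= k by rewrite /k; have := ler_norm c; lra.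
(* At [t = q / (2 k)] the hypothesis reads [0 <= t ^+ 2 * (c - 2 k) <= - k t ^+ 2]. *)
set t := q / (2 * k).
have qE : q = 2 * k * t by rewrite /t; field; rewrite gt_eqF.
have := ge0 t; rewrite qE => h.
have t2_le0 : t ^+ 2 <= 0 by nra.
have : t = 0 by apply/eqP; rewrite -sqrf_eq0 eq_le t2_le0 sqr_ge0.
by move=> ->; rewrite mulr0.
Qed.

Section Moments.
Context {dsp : measure_display} {T : measurableType dsp} {R : realType}.
Variable Pr : probability T R.
Local Notation L1 := (Lfun Pr 1).
Local Notation L2 := (Lfun Pr 2%:E).
Local Notation mean := (mean Pr).
Local Notation cov := (cov Pr).

Lemma Lfun2_Lfun1 {f : T -> R} : f \in L2 -> f \in L1.
Proof. exact/Lfun_subset12/fin_num_measure. Qed.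

Section LfunClosure.
Context {r : \bar R} (r1 : (1 <= r)%E).

Lemma LfunD {f g : T -> R} : f \in Lfun Pr r -> g \in Lfun Pr r ->
  (fun w => f w + g w) \in Lfun Pr r.
Proof. by move=> hf hg; have /(_ r1) := rpredD hf hg. Qed.

Lemma LfunZr {f : T -> R} (a : R) : f \in Lfun Pr r -> (fun w => f w * a) \in Lfun Pr r.
Proof.
move=> hf; have -> : (fun w => f w * a) = a *: f by apply/funext => w; rewrite mulrC.
by have /(_ r1) := rpredZ a hf.
Qed.

Lemma LfunB {f g : T -> R} : f \in Lfun Pr r -> g \in Lfun Pr r ->
  (fun w => f w - g w) \in Lfun Pr r.
Proof. by move=> hf hg; have /(_ r1) := rpredB hf hg. Qed.

Lemma Lfun_lincomb (I : Type) (s : seq I) (F : I -> T -> R) (b : I -> R) :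
  (forall i, F i \in Lfun Pr r) -> (fun w => \sum_(i <- s) F i w * b i) \in Lfun Pr r.
Proof.
move=> hF; elim: s => [|i s IH].
  by under eq_fun do rewrite big_nil; have /(_ r1) := rpred0 (Lfun Pr r).
by under eq_fun do rewrite big_cons; exact: LfunD (LfunZr _ (hF i)) IH.
Qed.

End LfunClosure.

Lemma meanD f g : f \in L1 -> g \in L1 ->
  mean (fun w => f w + g w) = mean f + mean g.
Proof.
move=> hf hg; rewrite /Defs.mean -[fun w => _]/(f \+ g) expectationD //.
by rewrite fineD // expectation_fin_num.
Qed.

Lemma meanZr f a : f \in L1 -> mean (fun w => f w * a) = mean f * a.
Proof.
move=> hf; rewrite /Defs.mean -[fun w => _]/(a \o* f) expectationZl //.
by rewrite fineM ?expectation_fin_num // mulrC.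
Qed.

Lemma mean_cst a : mean (fun _ => a) = a.
Proof. by rewrite /Defs.mean -[fun _ => a]/(cst a) expectation_cst. Qed.

Lemma mean_lincomb (I : Type) (s : seq I) (F : I -> T -> R) (b : I -> R) :
  (forall i, F i \in L1) ->
  mean (fun w => \sum_(i <- s) F i w * b i) = \sum_(i <- s) mean (F i) * b i.
Proof.
move=> hF; elim: s => [|i s IH].
  by under eq_fun do rewrite big_nil; rewrite mean_cst big_nil.
under eq_fun do rewrite big_cons.
rewrite meanD ?meanZr ?IH ?big_cons //; last exact: Lfun_lincomb.
exact: LfunZr.
Qed.

Lemma covE f g : f \in L2 -> g \in L2 ->
  cov f g = mean (fun w => f w * g w) - mean f * mean g.
Proof.
move=> hf hg; have f1 := Lfun2_Lfun1 hf; have g1 := Lfun2_Lfun1 hg.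
rewrite /Defs.cov covarianceE //; last exact: Lfun2_mul_Lfun1.
by rewrite fineB ?fin_numM ?expectation_fin_num ?fineM ?expectation_fin_num //;
  exact: Lfun2_mul_Lfun1.
Qed.

Lemma mean_centered f : f \in L1 -> mean (fun w => f w - mean f) = 0.
Proof. by move=> f1; rewrite meanD ?mean_cst ?subrr // Lfun_cst. Qed.

Lemma expectation_mean f : f \in L1 -> ('E_Pr[f] = (mean f)%:E)%E.
Proof. by move=> f1; rewrite fineK // expectation_fin_num. Qed.

Lemma cov_centered f g : f \in L2 -> g \in L2 ->
  cov f g = mean (fun w => (f w - mean f) * g w).
Proof.
move=> hf hg.
have -> : (fun w => (f w - mean f) * g w) = fun w => f w * g w + g w * - mean f.
  by apply/funext => w; ring.
have fg1 := Lfun2_mul_Lfun1 hf hg; have g1 := Lfun2_Lfun1 hg.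
have gm1 := LfunZr (lexx _) (- mean f) g1.
by rewrite meanD ?meanZr ?covE //; ring.
Qed.

Lemma mean_mul_eq0_of_min (e h : T -> R) : e \in L2 -> h \in L2 ->
  (forall t : R, 'E_Pr[fun w => (e w ^+ 2 / 2)%R]
                 <= 'E_Pr[fun w => ((e w - t * h w) ^+ 2 / 2)%R])%E ->
  mean (fun w => e w * h w) = 0.
Proof.
move=> he hh min_e.
have [ee eh hh2] : [/\ (fun w => e w * e w) \in L1, (fun w => e w * h w) \in L1
  & (fun w => h w * h w) \in L1] by split; exact: Lfun2_mul_Lfun1.
have quadE (t : R) : (fun w => (e w - t * h w) ^+ 2 / 2) = fun w =>
    e w * e w * 2^-1 + e w * h w * (- t) + h w * h w * (t ^+ 2 / 2).
  by apply/funext => w; field.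
have terms_L1 (t : R) : [/\ (fun w => e w * e w / 2) \in L1,
    (fun w => e w * h w * - t) \in L1 & (fun w => h w * h w * (t ^+ 2 / 2)) \in L1].
  split; [exact: (LfunZr (lexx _) _ ee) | exact: (LfunZr (lexx _) _ eh)|].
  exact: (LfunZr (lexx _) _ hh2).
have quad_L1 (t : R) : (fun w => (e w - t * h w) ^+ 2 / 2) \in L1.
  by have [? ? ?] := terms_L1 t; rewrite quadE; do 2?apply: (LfunD (lexx _)).
apply: (@eq0_of_quadratic_ge0 _ _ (mean (fun w => h w * h w) / 2)) => t.
have := min_e t; rewrite [X in ('E_Pr[X] <= _)%E](_ : _ = fun w =>
    (e w - 0 * h w) ^+ 2 / 2); last by apply/funext => w; rewrite mul0r subr0.
have [? ? ?] := terms_L1 0; have [? ? ?] := terms_L1 t.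
rewrite !expectation_mean // lee_fin !quadE !meanD ?meanZr //; try exact: (LfunD (lexx _)).
by rewrite oppr0 expr0n /= mul0r !mulr0 !addr0 => ?; nra.
Qed.

End Moments.

Section CovarianceMatrices.
Context {dsp : measure_display} {T : measurableType dsp} {R : realType}.
Variable Pr : probability T R.

Lemma covmx_comp n m (V : 'I_n -> T -> R) (f : 'I_m -> 'I_n) :
  covmx Pr (V \o f) = mxsub f f (covmx Pr V).
Proof. by apply/matrixP => a b; rewrite !mxE. Qed.

Lemma ulsubmx_covmx_catRV m n (U : 'I_m -> T -> R) (V : 'I_n -> T -> R) :
  ulsubmx (covmx Pr (catRV U V)) = covmx Pr U.
Proof. by apply/matrixP => i j; rewrite !mxE /catRV !split_lshift. Qed.

Lemma ursubmx_covmx_catRV m n (U : 'I_m -> T -> R) (V : 'I_n -> T -> R) :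
  ursubmx (covmx Pr (catRV U V)) = \matrix_(i, j) cov Pr (U i) (V j).
Proof. by apply/matrixP => i j; rewrite !mxE /catRV split_lshift split_rshift. Qed.

Lemma regression_coef_gt0_of_pcor p q (Z : 'I_p -> T -> R) (X : 'I_q -> T -> R) j k :
  posdef (covmx Pr (catRV Z X)) ->
  0 < pcor Pr (catRV Z (fun _ : 'I_1 => X j)) (lshift 1 k) (rshift p ord0) ->
  0 < (invmx (covmx Pr Z) *m \matrix_(l, i) cov Pr (Z l) (X i)) k j.
Proof.
move=> posZX pcor_gt0.
pose f (a : 'I_(p + 1)) : 'I_(p + q) :=
  match fintype.split a with inl l => lshift q l | inr _ => rshift p j end.
have f_inj : injective f.
  move=> a b; rewrite /f; case: (split_ordP a) => a' ->; case: (split_ordP b) => b' ->;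
    rewrite ?(split_lshift, split_rshift).
  - by move/lshift_inj ->.
  - by move/eqP; rewrite eq_lrshift.
  - by move/eqP; rewrite eq_rlshift.
  - by rewrite !ord1.
have XjE : catRV Z (fun _ : 'I_1 => X j) = catRV Z X \o f.
  apply/funext => a; rewrite /f /catRV /=.
  by case: (fintype.split a) => b; rewrite ?split_lshift ?split_rshift.
have posZXj : posdef (covmx Pr (catRV Z (fun _ : 'I_1 => X j))).
  by rewrite XjE covmx_comp; exact: posdef_mxsub.
have := @lsq_coef_gt0_of_pcor R p _ k posZXj pcor_gt0.
rewrite /lsq_coef ulsubmx_covmx_catRV ursubmx_covmx_catRV !mxE.
by under eq_bigr do rewrite mxE; under [in X in _ -> X]eq_bigr do rewrite mxE.
Qed.

End CovarianceMatrices.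

Section NormalEquations.
Context {dsp : measure_display} {T : measurableType dsp} {R : realType}.
Context {Pr : probability T R} {p d : nat}.
Context {Y : T -> R} {Z : 'I_p -> T -> R} {X : 'I_d -> T -> R}.
Context {alpha : R} {betaZ : 'I_p -> R} {betaX : 'I_d -> R}.
Local Notation L2 := (Lfun Pr 2%:E).
Local Notation mean := (mean Pr).
Local Notation cov := (cov Pr).
Hypotheses (Y2 : Y \in L2) (Z2 : forall l, Z l \in L2) (X2 : forall j, X j \in L2).
Hypothesis alpha_beta_min : forall (a : R) (bZ : 'I_p -> R) (bX : 'I_d -> R),
  ('E_Pr[fun w => ((Y w - alpha - \sum_(l < p) Z l w * betaZ l
                     - \sum_(j < d) X j w * betaX j) ^+ 2 / 2)%R]
   <= 'E_Pr[fun w => ((Y w - a - \sum_(l < p) Z l w * bZ l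
                     - \sum_(j < d) X j w * bX j) ^+ 2 / 2)%R])%E.

Let le1_2 : (1 <= 2%:E :> \bar R)%E. Proof. by rewrite lee_fin ler1n. Qed.

Let resid w := Y w - alpha - \sum_(m < p) Z m w * betaZ m - \sum_(j < d) X j w * betaX j.

Let resid_Lfun2 : resid \in L2.
Proof.
exact (LfunB Pr le1_2 (LfunB Pr le1_2 (LfunB Pr le1_2 Y2 (Lfun_cst Pr alpha 2))
  (Lfun_lincomb Pr le1_2 _ _ _ betaZ Z2)) (Lfun_lincomb Pr le1_2 _ _ _ betaX X2)).
Qed.

Lemma mean_resid_mul_centered l : mean (fun w => resid w * (Z l w - mean (Z l))) = 0.
Proof.
apply: mean_mul_eq0_of_min => //; first exact: (LfunB Pr le1_2 (Z2 l) (Lfun_cst Pr _ 2)).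
(* Move the coefficient of [Z l] by [t] and the intercept by [- t * mean (Z l)]. *)
move=> t; have -> : (fun w => ((resid w - t * (Z l w - mean (Z l))) ^+ 2 / 2)%R) =
    fun w => ((Y w - (alpha - t * mean (Z l))
               - \sum_(m < p) Z m w * (betaZ m + t * (m == l)%:R)
               - \sum_(j < d) X j w * betaX j) ^+ 2 / 2)%R.
  apply/funext => w; congr (_ ^+ 2 / 2).
  have delta : \sum_(m < p) Z m w * (t * (m == l)%:R) = t * Z l w.
    rewrite (bigD1 l) //= eqxx mulr1 mulrC big1 ?addr0 // => m /negbTE ->.
    by rewrite !mulr0.
  under [in RHS]eq_bigr do rewrite mulrDr.
  by rewrite big_split /= delta /resid; ring.
exact: alpha_beta_min.
Qed.

Lemma cov_normal_equation l :
  cov (Z l) Y = \sum_m cov (Z l) (Z m) * betaZ m + \sum_j cov (Z l) (X j) * betaX j.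
Proof.
set h := fun w => Z l w - mean (Z l).
have h2 : h \in L2 := LfunB Pr le1_2 (Z2 l) (Lfun_cst Pr _ 2).
have hZ1 m : (fun w => h w * Z m w) \in Lfun Pr 1 by exact: Lfun2_mul_Lfun1.
have hX1 j : (fun w => h w * X j w) \in Lfun Pr 1 by exact: Lfun2_mul_Lfun1.
have rh1 : (fun w => resid w * h w) \in Lfun Pr 1 by exact: Lfun2_mul_Lfun1.
have h1 := Lfun2_Lfun1 Pr h2; have ha1 := LfunZr Pr (lexx _) alpha h1.
have sZ1 := Lfun_lincomb Pr (lexx _) _ (index_enum 'I_p) _ betaZ hZ1.
have sX1 := Lfun_lincomb Pr (lexx _) _ (index_enum 'I_d) _ betaX hX1.
have s12 := LfunD Pr (lexx _) rh1 ha1; have s123 := LfunD Pr (lexx _) s12 sZ1.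
have Zl1 := Lfun2_Lfun1 Pr (Z2 l).
rewrite cov_centered // (_ : (fun w => _) = fun w => resid w * h w + h w * alpha
    + \sum_(m < p) h w * Z m w * betaZ m + \sum_(j < d) h w * X j w * betaX j).
  rewrite !meanD ?meanZr ?mean_lincomb ?mean_resid_mul_centered ?mean_centered //.
  rewrite mul0r !add0r.
  by congr (_ + _); apply: eq_bigr => m _; rewrite cov_centered.
apply/funext => w; have factor_h q (U : 'I_q -> T -> R) b :
    \sum_(i < q) h w * U i w * b i = h w * \sum_(i < q) U i w * b i.
  by rewrite mulr_sumr; apply: eq_bigr => i _; rewrite mulrA.
by rewrite !factor_h /resid /h; ring.
Qed.

Lemma omitted_variable_bias : covmx Pr Z \in unitmx ->
  invmx (covmx Pr Z) *m \col_l cov (Z l) Y =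
  \col_l betaZ l + invmx (covmx Pr Z) *m (\matrix_(l, j) cov (Z l) (X j) *m \col_j betaX j).
Proof.
move=> CZ_unit; rewrite -[\col_l betaZ l](mulKmx CZ_unit) -mulmxDr.
congr (_ *m _); apply/matrixP => l i; rewrite !mxE cov_normal_equation.
by congr (_ + _); apply: eq_bigr => m _; rewrite !mxE.
Qed.

End NormalEquations.

(** * Convergence in probability *)

Lemma mem_bigsetU (T : Type) (I : eqType) (s : seq I) (A : I -> set T) i w :
  i \in s -> A i w -> (\big[setU/set0]_(j <- s) A j) w.
Proof.
elim: s => [//|j s IH]; rewrite inE big_cons => /orP[/eqP <- Aiw|js Aiw].
  by left.
by right; apply: IH.
Qed.

Section ConvergenceInProbability.
Context {dsp : measure_display} {T : measurableType dsp} {R : realType}.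
Variable Pr : probability T R.

Lemma measurable_dev (f : T -> R) (c e : R) : measurable_fun setT f ->
  measurable [set w | e <= `|f w - c|].
Proof.
move=> mf; have mdev : measurable_fun setT (fun w => e <= `|f w - c|).
  apply: measurable_fun_ler; first exact: measurable_cst.
  by apply: measurableT_comp => //; apply: measurable_funB => //; exact: measurable_cst.
have := mdev measurableT [set true] I; rewrite setTI.
by congr measurable; apply/seteqP; split => w /=.
Qed.

Lemma measure_bigsetU_le (I : Type) (s : seq I) (A : I -> set T) :
  (forall i, measurable (A i)) ->
  (Pr (\big[setU/set0]_(i <- s) A i) <= \sum_(i <- s) Pr (A i))%E.
Proof.
move=> mA; elim: s => [|i s IH]; first by rewrite !big_nil measure0.
rewrite !big_cons; apply: le_trans (measureU2 _ _ _) _ => //.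
  exact: bigsetU_measurable.
exact: leeD.
Qed.

Lemma cvg_in_prob_continuous m n (S : nat -> T -> 'M[R]_(m, n)) (S0 : 'M[R]_(m, n))
    (G : 'M[R]_(m, n) -> R) (D : set 'M[R]_(m, n)) (H : nat -> T -> R) :
  (forall N i j, measurable_fun setT (fun w => S N w i j)) ->
  (forall i j, cvg_in_prob Pr (fun N w => S N w i j) (S0 i j)) ->
  (forall N, measurable_fun setT (H N)) ->
  nbhs S0 D -> (forall N w, (0 < N)%N -> D (S N w) -> H N w = G (S N w)) ->
  {for S0, continuous G} -> cvg_in_prob Pr H (G S0).
Proof.
move=> mS cvgS mH D_S0 HG G_cont e e_gt0.
have [del del_gt0 del_sub] : exists2 del : R, 0 < del &
    ball S0 del `<=` [set A | D A /\ `|G A - G S0| < e].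
  apply/nbhs_ballP; near=> A; split; first by near: A.
  by near: A; exact: cvgr_distC_lt G_cont _ e_gt0.
pose B (ij : 'I_m * 'I_n) N := [set w | del <= `|S N w ij.1 ij.2 - S0 ij.1 ij.2|].
have mB ij N : measurable (B ij N) by exact: measurable_dev.
have dev_sub N : (0 < N)%N ->
    [set w | e <= `|H N w - G S0|] `<=` \big[setU/set0]_ij B ij N.
  move=> N_gt0 w /= dev_w; apply: contrapT => not_B.
  have /del_sub[DS GS] : ball S0 del (S N w).
    split => // i j; rewrite /ball /= distrC ltNge; apply/negP => dev_ij; apply: not_B.
    exact: (@mem_bigsetU _ _ _ _ (i, j)) (mem_index_enum _) dev_ij.
  by move: dev_w; rewrite HG // leNgt GS.
have cvgB ij : (fun N => fine (Pr (B ij N))) @ \oo --> 0.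
  by have /fine_cvgP[] := cvgS ij.1 ij.2 del del_gt0.
apply/fine_cvgP; split.
  by apply: nearW => N; apply: fin_num_measure; exact: measurable_dev.
apply: (@squeeze_cvgr _ _ _ _ (fun _ => 0) (fun N => \sum_ij fine (Pr (B ij N)))).
- near=> N; rewrite fine_ge0 ?measure_ge0 //=.
  have N_gt0 : (0 < N)%N by near: N; exists 1%N.
  rewrite sum_fine; last by move=> ij _; exact: fin_num_measure.
  rewrite fine_le //; first by apply: fin_num_measure; exact: measurable_dev.
    by apply/sum_fin_numP => ij _ _; exact: fin_num_measure.
  apply: (@le_trans _ _ (Pr (\big[setU/set0]_ij B ij N))).
    apply: le_measure (dev_sub N N_gt0); rewrite ?inE //; first exact: measurable_dev.
    exact: bigsetU_measurable.
  exact: measure_bigsetU_le.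
- exact: cvg_cst.
rewrite [X in _ --> X](_ : 0 = \sum_(ij : 'I_m * 'I_n) 0); last by rewrite big1.
by apply: cvg_big => [|ij _]; [exact: add_continuous | exact: cvgB].
Unshelve. all: end_near.
Qed.

Lemma eq_cvg_in_prob {Xn Yn : nat -> T -> R} {c : R} :
  cvg_in_prob Pr Xn c -> (forall N w, Xn N w = Yn N w) -> cvg_in_prob Pr Yn c.
Proof. by move=> + XY; have -> : Xn = Yn by apply/funext => N; apply/funext. Qed.

Definition opt_rv {I : Type} (V : I -> T -> R) (o : option I) : T -> R :=
  if o is Some u then V u else fun _ => 1.

Lemma cvg_in_prob_sample_moment (I : Type) (Vs : nat -> I -> T -> R) (V : I -> T -> R) :
  (forall u, cvg_in_prob Pr (fun N w => N%:R^-1 * \sum_(i < N) Vs i u w) (mean Pr (V u))) ->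
  (forall u v, cvg_in_prob Pr
     (fun N w => N%:R^-1 * \sum_(i < N) (Vs i u w * Vs i v w))
     (mean Pr (fun w => V u w * V v w))) ->
  forall o1 o2 : option I, cvg_in_prob Pr
    (fun N w => N%:R^-1 * \sum_(i < N) (opt_rv (Vs i) o1 w * opt_rv (Vs i) o2 w))
    (mean Pr (fun w => opt_rv V o1 w * opt_rv V o2 w)).
Proof.
move=> mom1 mom2 [u|] [v|] /=.
- exact: mom2.
- rewrite (_ : (fun w => _) = V u); last by apply/funext => w; rewrite mulr1.
  by apply: (eq_cvg_in_prob (mom1 u)) => N w; under eq_bigr do rewrite mulr1.
- rewrite (_ : (fun w => _) = V v); last by apply/funext => w; rewrite mul1r.
  by apply: (eq_cvg_in_prob (mom1 v)) => N w; under eq_bigr do rewrite mul1r.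
rewrite mulr1 (mean_cst Pr) => e e_gt0; apply: cvg_near_cst; near=> N.
suff -> : [set w : T | e <= `|N%:R^-1 * \sum_(i < N) (1 : R) - 1|] = set0.
  exact: measure0.
apply/seteqP; split => // w /=; rewrite sumr_const card_ord mulVf ?subrr ?normr0.
  by rewrite leNgt e_gt0.
by rewrite pnatr_eq0 -lt0n; near: N; exists 1%N.
Unshelve. all: end_near.
Qed.

End ConvergenceInProbability.

(** * Ordinary least squares *)

Section OrdinaryLeastSquares.
Context {dsp : measure_display} {T : measurableType dsp} {R : realType}.
Variables (Pr : probability T R) (p d : nat).
Local Notation vars := (var_idx p d).

(* The entries of (1, Z, Y); [None] is the constant regressor 1 of the intercept. *)
Definition regressor (c : 'I_(1 + p + 1)) : option vars :=
  match fintype.split c with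
  | inl c' => if fintype.split c' is inr l then Some (VZ d l) else None
  | inr _ => Some (VY p d)
  end.

Definition data_mx (Vs : nat -> vars -> T -> R) N w : 'M[R]_(N, 1 + p + 1) :=
  \matrix_(i, c) opt_rv (Vs i) (regressor c) w.

Definition moment_mx (V : vars -> T -> R) : 'M[R]_(1 + p + 1) :=
  \matrix_(a, b) mean Pr (fun w => opt_rv V (regressor a) w * opt_rv V (regressor b) w).

Variables (Ys : nat -> T -> R) (Zs : nat -> 'I_p -> T -> R) (Xs Ws : nat -> 'I_d -> T -> R).
Let Vs i := joint (Ys i) (Zs i) (Xs i) (Ws i).

Lemma ols_Z_data_mx N w l :
  ols_Z Ys Zs N w l = lsq_coef ((data_mx Vs N w)^T *m data_mx Vs N w) (rshift 1 l) 0.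
Proof.
rewrite /ols_Z /=; set D := \matrix_(i < N, c < 1 + p) _; set y := \col_(i < N) Ys i w.
have -> : data_mx Vs N w = row_mx D y.
  apply/matrixP => i c; rewrite !mxE /regressor.
  by case: (fintype.split c) => [c' | c'']; rewrite ?mxE //; case: (fintype.split c').
by rewrite lsq_coef_gram.
Qed.

Lemma cvg_in_prob_ols_Z (V : vars -> T -> R) :
  (forall i u, measurable_fun setT (Vs i u)) ->
  (forall u, cvg_in_prob Pr (fun N w => N%:R^-1 * \sum_(i < N) Vs i u w) (mean Pr (V u))) ->
  (forall u v, cvg_in_prob Pr
     (fun N w => N%:R^-1 * \sum_(i < N) (Vs i u w * Vs i v w))
     (mean Pr (fun w => V u w * V v w))) ->
  ulsubmx (moment_mx V) \in unitmx ->
  forall k c, cvg_in_prob Pr (fun N w => ols_Z Ys Zs N w k - c)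
                           (lsq_coef (moment_mx V) (rshift 1 k) 0 - c).
Proof.
move=> mVs mom1 mom2 S0_unit k c.
pose S N w : 'M[R]_(1 + p + 1) := N%:R^-1 *: ((data_mx Vs N w)^T *m data_mx Vs N w).
have SE N w a b : S N w a b = N%:R^-1 * \sum_(i < N)
    (opt_rv (Vs i) (regressor a) w * opt_rv (Vs i) (regressor b) w).
  by rewrite !mxE; congr (_ * _); apply: eq_bigr => i _; rewrite !mxE.
have m_opt i o : measurable_fun setT (opt_rv (Vs i) o).
  by case: o => [u|] /=; [exact: mVs | exact: measurable_cst].
have m_gram N a b : measurable_fun setT (fun w => ((data_mx Vs N w)^T *m data_mx Vs N w) a b).
  under eq_fun do rewrite mxE; apply: measurable_sum => i.
  by under eq_fun do rewrite !mxE; exact: measurable_funM.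
apply: (cvg_in_prob_continuous Pr _ _ S _ (fun A => lsq_coef A (rshift 1 k) 0 - c) _ _ _ _ _
  (near_ulsubmx_unit S0_unit)).
- move=> N a b; under eq_fun do rewrite SE.
  apply: measurable_funM; first exact: measurable_cst.
  by apply: measurable_sum => i; exact: measurable_funM.
- move=> a b; rewrite mxE.
  apply: (eq_cvg_in_prob Pr (cvg_in_prob_sample_moment Pr _ _ _ mom1 mom2 _ _)) => N w.
  by rewrite SE.
- move=> N; under eq_fun do rewrite ols_Z_data_mx.
  by apply: measurable_funB; [exact: measurable_fun_lsq_coef | exact: measurable_cst].
- move=> N w N_gt0 /= S_unit; rewrite ols_Z_data_mx lsq_coefZ //.
  by rewrite invr_eq0 pnatr_eq0 -lt0n.
by apply: (@cvgB _ _ _ (nbhs _)); [exact: lsq_coef_continuous | exact: cvg_cst].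
Qed.

Variables (Y : T -> R) (Z : 'I_p -> T -> R) (X W : 'I_d -> T -> R).
Let J := joint Y Z X W.
Let mu : 'cV[R]_p := \col_l mean Pr (Z l).
Let MZ : 'M[R]_p := \matrix_(l, m) mean Pr (fun w => Z l w * Z m w).
Let mZY : 'cV[R]_p := \col_l mean Pr (fun w => Z l w * Y w).

Lemma ulsubmx_moment_mx : ulsubmx (moment_mx J) = block_mx 1%:M mu^T mu MZ.
Proof.
apply/matrixP => a b; case: (split_ordP a) => a' ->; case: (split_ordP b) => b' ->;
  rewrite !mxE /regressor; rewrite ?(split_lshift, split_rshift, mxE) /=.
- by rewrite mul1r mean_cst !ord1 eqxx.
all: by under eq_fun do rewrite ?mul1r ?mulr1.
Qed.

Lemma ursubmx_moment_mx : ursubmx (moment_mx J) = col_mx (mean Pr Y)%:M mZY.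
Proof.
apply/matrixP => a b; case: (split_ordP a) => a' ->;
  rewrite !mxE /regressor; rewrite ?(split_lshift, split_rshift, mxE) /=.
- by rewrite !ord1 eqxx mulr1n; under eq_fun do rewrite mul1r.
- by [].
Qed.

Hypotheses (Y2 : Y \in Lfun Pr 2%:E) (Z2 : forall l, Z l \in Lfun Pr 2%:E).

Lemma moment_schur_covmx : MZ - mu *m mu^T = covmx Pr Z.
Proof.
apply/matrixP => l m; rewrite !mxE covE // big_ord1.
by rewrite !mxE.
Qed.

Lemma moment_schur_cov : mZY - mu *m (mean Pr Y)%:M = \col_l cov Pr (Z l) Y.
Proof.
by apply/matrixP => l i; rewrite mul_mx_scalar !mxE covE // mulrC.
Qed.

Lemma lsq_coef_moment_mx : covmx Pr Z \in unitmx ->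
  ulsubmx (moment_mx J) \in unitmx /\ forall k,
  lsq_coef (moment_mx J) (rshift 1 k) 0 = (invmx (covmx Pr Z) *m \col_l cov Pr (Z l) Y) k 0.
Proof.
rewrite -moment_schur_covmx -moment_schur_cov => C_unit.
split=> [|k]; first by rewrite ulsubmx_moment_mx; exact: unitmx_moment_block.
rewrite -(dsubmx_moment_block_solve C_unit) -ulsubmx_moment_mx -ursubmx_moment_mx.
by rewrite [RHS]mxE.
Qed.

End OrdinaryLeastSquares.

Theorem proposition1 (dsp : measure_display) (T : measurableType dsp)
  (R : realType) (Pr : probability T R) (p d : nat)
  (Y : T -> R) (Z : 'I_p -> T -> R) (X W : 'I_d -> T -> R)
  (Ys : nat -> T -> R) (Zs : nat -> 'I_p -> T -> R)
  (Xs Ws : nat -> 'I_d -> T -> R)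
  (alpha : R) (betaZ : 'I_p -> R) (betaX : 'I_d -> R) (Pol : {set 'I_p}) :
  (* Y, Z, X, W have finite second moments *)
  (forall u : var_idx p d, joint Y Z X W u \in Lfun Pr 2%E) ->
  (* (alpha, betaZ, betaX) are the population regression coefficients *)
  (forall (a : R) (bZ : 'I_p -> R) (bX : 'I_d -> R),
     ('E_Pr[fun w => ((Y w - alpha - \sum_(l < p) Z l w * betaZ l
                        - \sum_(j < d) X j w * betaX j) ^+ 2 / 2)%R]
      <= 'E_Pr[fun w => ((Y w - a - \sum_(l < p) Z l w * bZ l
                        - \sum_(j < d) X j w * bX j) ^+ 2 / 2)%R])%E) ->
  (* the samples are random variables *)
  (forall (i : nat) (u : var_idx p d),
     measurable_fun setT (joint (Ys i) (Zs i) (Xs i) (Ws i) u)) ->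
  (* (i) identically distributed with the law of (Y, Z, X, W) *)
  (forall i : nat, same_law Pr (joint (Ys i) (Zs i) (Xs i) (Ws i)) (joint Y Z X W)) ->
  (* (i) sample first moments converge in probability *)
  (forall u : var_idx p d,
     cvg_in_prob Pr
       (fun N w => N%:R^-1 * \sum_(i < N) joint (Ys i) (Zs i) (Xs i) (Ws i) u w)
       (mean Pr (joint Y Z X W u))) ->
  (* (i) sample second moments converge in probability *)
  (forall u v : var_idx p d,
     cvg_in_prob Pr
       (fun N w => N%:R^-1 * \sum_(i < N)
          (joint (Ys i) (Zs i) (Xs i) (Ws i) u w *
           joint (Ys i) (Zs i) (Xs i) (Ws i) v w))
       (mean Pr (fun w => joint Y Z X W u w * joint Y Z X W v w))) ->
  (* (ii) eps_i is uncorrelated with W_i - X_i *)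
  (forall (i : nat) (j : 'I_d),
     covariance Pr
       (fun w => Ys i w - alpha - \sum_(l < p) Zs i l w * betaZ l
                 - \sum_(j' < d) Xs i j' w * betaX j')
       (fun w => Ws i j w - Xs i j w) = 0%E) ->
  (* (iii) Cov(Z, W) and Cov(Z, X) are positive definite *)
  posdef (covmx Pr (catRV Z W)) ->
  posdef (covmx Pr (catRV Z X)) ->
  (* No Benefit *)
  (forall j : 'I_d, betaX j <= 0) ->
  (forall l : 'I_p, l \in Pol -> betaZ l <= 0) ->
  (* Weak Partial PC+ : pcor(Z^(l), X^(j) | (Z^(m))_{m <> l}) > 0 *)
  (forall (l : 'I_p) (j : 'I_d), l \in Pol ->
     0 < pcor Pr (catRV Z (fun _ : 'I_1 => X j)) (lshift 1 l) (rshift p ord0)) ->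
  (* the omitted-variable bias exists (as a plim) and is nonpositive on Pol *)
  exists bias : 'I_p -> R,
    (forall k : 'I_p,
       cvg_in_prob Pr (fun N w => ols_Z Ys Zs N w k - betaZ k) (bias k)) /\
    (forall k : 'I_p, k \in Pol -> bias k <= 0).
Proof.
move=> L2 alpha_beta_min meas _ mom1 mom2 _ _ posZX betaX_le0 _ pcor_gt0.
have Y2 : Y \in Lfun Pr 2%:E := L2 (VY p d).
have Z2 l : Z l \in Lfun Pr 2%:E := L2 (VZ d l).
have X2 j : X j \in Lfun Pr 2%:E := L2 (VX p j).
set CZ := covmx Pr Z; set CZX := \matrix_(l, j) cov Pr (Z l) (X j).
have CZ_unit : CZ \in unitmx.
  by apply/posdef_unitmx; rewrite /CZ -(ulsubmx_covmx_catRV Pr _ _ Z X); exact: posdef_ulsubmx.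
have [S0_unit S0_Z] := lsq_coef_moment_mx Pr p d Y Z X W Y2 Z2 CZ_unit.
exists (fun k => (invmx CZ *m (CZX *m \col_j betaX j)) k 0); split.
- move=> k; have := cvg_in_prob_ols_Z Pr p d Ys Zs Xs Ws _ meas mom1 mom2 S0_unit k (betaZ k).
  rewrite S0_Z (omitted_variable_bias Y2 Z2 X2 alpha_beta_min CZ_unit).
  by rewrite mxE [(\col_l betaZ l) k 0]mxE addrAC subrr add0r.
- move=> k kP; rewrite mulmxA mxE.
  apply: sumr_le0 => j _; rewrite [X in _ * X]mxE; apply: mulr_ge0_le0 => //.
  by apply/ltW; apply: (regression_coef_gt0_of_pcor Pr) => //; exact: pcor_gt0.
Qed.
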